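(* For every $x=(x_1^\top,\dots,x_m^\top)^\top\in\mathbb R^d$ with $x_i\in\mathbb R^{\bar d}$, $$\max\Big\{\|Hx\|,\ \min_{\gamma}\|\nabla f_0(x)+H^\top\gamma\|\Big\}\ \ge\ \frac{\sqrt m}{2}\Big\|\frac1m\sum_{i=1}^m\nabla f_i(\bar x)\Big\|,\qquad\text{where }\bar x=\frac1m\sum_{i=1}^mx_i.$$
   Context: Fix $\epsilon\in(0,1)$, $L_f>0$, integers $m_1\ge2$, $m_2\ge1$ with $m_1m_2$ even, $m=3m_1m_2$, an odd integer $\bar d\ge5$, $d=m\bar d$; $[z]_j$ is the $j$-th coordinate. $J_p\in\mathbb R^{(p-1)\times p}$ has $-1$ at $(k,k)$, $1$ at $(k,k+1)$, zero elsewhere; $H=mL_f(J_m\otimes I_{\bar d})$. $\Psi(u)=0$ ($u\le0$), $1-e^{-u^2}$ ($u>0$); $\Phi(v)=4\arctan v+2\pi$. For $z\in\mathbb R^{\bar d}$: $\varphi(z,1)=-\Psi(1)\Phi([z]_1)$, $\varphi(z,j)=\Psi(-[z]_{j-1})\Phi(-[z]_j)-\Psi([z]_{j-1})\Phi([z]_j)$ ($2\le j\le\bar d$); $h_i(z)=\varphi(z,1)+3\sum_{j=1}^{\lfloor\bar d/2\rfloor}\varphi(z,2j)$ for $1\le i\le m/3$, $h_i(z)=\varphi(z,1)$ for $m/3+1\le i\le 2m/3$, $h_i(z)=\varphi(z,1)+3\sum_{j=1}^{\lfloor\bar d/2\rfloor}\varphi(z,2j+1)$ for $2m/3+1\le i\le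 m$. $f_i(z)=\frac{300\pi\epsilon^2}{mL_f}h_i(\frac{\sqrt mL_fz}{150\pi\epsilon})$, $f_0(x)=\sum_{i=1}^mf_i(x_i)$. *)

From Stdlib Require Import Reals Lra Lia Arith.
From Coquelicot Require Import Coquelicot.
Open Scope R_scope.

(* Vectors in R^n are functions nat -> R (only indices < n matter);
   matrices are functions nat -> nat -> R. All indices are 0-based. *)

Fixpoint vsum (n : nat) (f : nat -> R) : R :=
  match n with
  | O => 0
  | S k => vsum k f + f k
  end.

Definition vnorm (n : nat) (v : nat -> R) : R := sqrt (vsum n (fun i => v i ^ 2)).

Definition matvec (A : nat -> nat -> R) (n : nat) (v : nat -> R) : nat -> R :=
  fun i => vsum n (fun j => A i j * v j).

Definition transpose (A : nat -> nat -> R) : nat -> nat -> R := fun i j => A j i.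

Definition Jmat (p : nat) : nat -> nat -> R := fun i j =>
  if (Nat.ltb i (p - 1) && Nat.ltb j p)%bool then
    (if Nat.eqb j i then -1 else if Nat.eqb j (S i) then 1 else 0)
  else 0.

Definition Imat (q : nat) : nat -> nat -> R := fun i j =>
  if (Nat.ltb i q && Nat.eqb i j)%bool then 1 else 0.

Definition kron (A B : nat -> nat -> R) (p2 q2 : nat) : nat -> nat -> R :=
  fun i j => A (i / p2)%nat (j / q2)%nat * B (i mod p2)%nat (j mod q2)%nat.

Definition Hmat (Lf : R) (m dbar : nat) : nat -> nat -> R :=
  fun i j => INR m * Lf * kron (Jmat m) (Imat dbar) dbar dbar i j.

Definition Psi (u : R) : R := if Rle_dec u 0 then 0 else 1 - exp (- (u ^ 2)).
Definition Phi (v : R) : R := 4 * atan v + 2 * PI.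

(* [z]_j, 1-indexed coordinate *)
Definition coord (z : nat -> R) (j : nat) : R := z (j - 1)%nat.

Definition varphi (z : nat -> R) (j : nat) : R :=
  if Nat.eqb j 1 then - Psi 1 * Phi (coord z 1)
  else Psi (- coord z (j - 1)) * Phi (- coord z j)
       - Psi (coord z (j - 1)) * Phi (coord z j).

(* h_i, i 1-indexed in 1..m *)
Definition hfun (m dbar i : nat) (z : nat -> R) : R :=
  if Nat.leb i (m / 3) then
    varphi z 1 + 3 * vsum (dbar / 2) (fun j => varphi z (2 * (S j)))
  else if Nat.leb i (2 * m / 3) then varphi z 1
  else varphi z 1 + 3 * vsum (dbar / 2) (fun j => varphi z (2 * (S j) + 1)).

Definition ffun (eps Lf : R) (m dbar i : nat) (z : nat -> R) : R :=
  (300 * PI * eps ^ 2 / (INR m * Lf)) *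
  hfun m dbar i (fun k => sqrt (INR m) * Lf * z k / (150 * PI * eps)).

(* block i (0-indexed) of x in R^{m dbar}: x_{i+1} in the paper *)
Definition block (dbar : nat) (x : nat -> R) (i : nat) : nat -> R :=
  fun k => x (i * dbar + k)%nat.

Definition f0 (eps Lf : R) (m dbar : nat) (x : nat -> R) : R :=
  vsum m (fun i => ffun eps Lf m dbar (S i) (block dbar x i)).

Definition partial (g : (nat -> R) -> R) (k : nat) (x : nat -> R) : R :=
  Derive (fun t => g (fun l => if Nat.eqb l k then x l + t else x l)) 0.

Definition grad (g : (nat -> R) -> R) (x : nat -> R) : nat -> R :=
  fun k => partial g k x.

From Stdlib Require Import Reals Arith Lra Lia Psatz FunctionalExtensionality.
From Coquelicot Require Import Coquelicot.
Open Scope R_scope.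

(* Write g for the vector grad f_0(x) + H^T gamma and g_i for its blocks. The
   columns of J_m sum to zero, so the blocks of H^T gamma sum to zero and
   sum_i g_i = sum_i grad f_i(x_i); by Cauchy-Schwarz its squared norm is at
   most m |g|^2.  Each grad f_i is L_f-Lipschitz: the gradient of h_i is
   75 pi-Lipschitz because its coordinates come in pairs, each depending on two
   coordinates of z only.  Hence sum_i grad f_i(x_i) differs from
   sum_i grad f_i(xbar) by at most m L_f^2 sum_i |x_i - xbar|^2
   <= m^3 L_f^2 sum_a |x_(a+1) - x_a|^2 = m |Hx|^2 in squared norm, and
   |sum_i grad f_i(xbar)|^2 <= 2m (|g|^2 + |Hx|^2) <= 4m max(|Hx|, |g|)^2. *)

(** * Finite sums *)

Lemma vsum_ext n f g : (forall i, (i < n)%nat -> f i = g i) -> vsum n f = vsum n g.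
Proof. induction n; simpl; intros H; auto. rewrite IHn, H; auto; intros; apply H; lia. Qed.

Lemma vsum_plus n f g : vsum n (fun i => f i + g i) = vsum n f + vsum n g.
Proof. induction n; simpl; [lra|]. rewrite IHn; lra. Qed.

Lemma vsum_minus n f g : vsum n (fun i => f i - g i) = vsum n f - vsum n g.
Proof. induction n; simpl; [lra|]. rewrite IHn; lra. Qed.

Lemma vsum_scal n c f : vsum n (fun i => c * f i) = c * vsum n f.
Proof. induction n; simpl; [lra|]. rewrite IHn; lra. Qed.

Lemma vsum_const n c : vsum n (fun _ => c) = INR n * c.
Proof. induction n; simpl vsum; [simpl; lra|]. rewrite IHn, S_INR; lra. Qed.

Lemma vsum_eq0 n f : (forall i, (i < n)%nat -> f i = 0) -> vsum n f = 0.
Proof. intros H. rewrite (vsum_ext n f (fun _ => 0)) by auto. rewrite vsum_const; lra. Qed.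

Lemma vsum_le n f g : (forall i, (i < n)%nat -> f i <= g i) -> vsum n f <= vsum n g.
Proof.
  induction n; simpl; intros H; [lra|].
  assert (f n <= g n) by (apply H; lia).
  assert (vsum n f <= vsum n g) by (apply IHn; intros; apply H; lia).
  lra.
Qed.

Lemma vsum_ge0 n f : (forall i, (i < n)%nat -> 0 <= f i) -> 0 <= vsum n f.
Proof. intros H. rewrite <- (vsum_eq0 n (fun _ => 0)) by auto. now apply vsum_le. Qed.

Lemma vsum_sq_ge0 n f : 0 <= vsum n (fun i => f i ^ 2).
Proof. apply vsum_ge0; intros; apply pow2_ge_0. Qed.

Lemma vsum_le_len n p f : (n <= p)%nat -> (forall i, (i < p)%nat -> 0 <= f i) ->
  vsum n f <= vsum p f.
Proof.
  induction 1 as [|p Hnp IH]; intros Hf; [lra|]. simpl.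
  assert (0 <= f p) by (apply Hf; lia).
  assert (vsum n f <= vsum p f) by (apply IH; intros; apply Hf; lia).
  lra.
Qed.

Lemma vsum_add n p f : vsum (n + p) f = vsum n f + vsum p (fun i => f (n + i)%nat).
Proof.
  induction p; simpl; [rewrite Nat.add_0_r; lra|].
  rewrite Nat.add_succ_r; simpl. rewrite IHp; lra.
Qed.

Lemma vsum_eq_single n f r : (r < n)%nat ->
  (forall i, (i < n)%nat -> i <> r -> f i = 0) -> vsum n f = f r.
Proof.
  induction n; intros Hr H; [lia|]. simpl. destruct (Nat.eq_dec n r).
  - subst. rewrite vsum_eq0; [lra|]. intros; apply H; lia.
  - rewrite IHn, (H n); [lra|lia|auto|lia|]. intros; apply H; lia.
Qed.

Lemma vsum_eq_two n f r1 r2 : (r1 < n)%nat -> (r2 < n)%nat -> r1 <> r2 ->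
  (forall i, (i < n)%nat -> i <> r1 -> i <> r2 -> f i = 0) -> vsum n f = f r1 + f r2.
Proof.
  induction n; intros H1 H2 Hne H; [lia|]. simpl. destruct (Nat.eq_dec n r1).
  - subst. rewrite (vsum_eq_single _ _ r2); [lra|lia|]. intros; apply H; lia.
  - destruct (Nat.eq_dec n r2).
    + subst. rewrite (vsum_eq_single _ _ r1); [lra|lia|]. intros; apply H; lia.
    + rewrite IHn, (H n); try lia; [|intros; apply H; lia]. lra.
Qed.

Lemma vsum_split_at n f r : (r < n)%nat ->
  vsum n f = vsum n (fun i => if Nat.eqb i r then 0 else f i) + f r.
Proof.
  intros Hr.
  assert (E := vsum_eq_single n (fun i => if Nat.eqb i r then f i else 0) r Hr).
  cbv beta in E. rewrite Nat.eqb_refl in E. rewrite <- E, <- vsum_plus.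
  - apply vsum_ext. intros i _. destruct (Nat.eqb i r); ring.
  - intros i _ Hi. destruct (Nat.eqb_spec i r); [lia|reflexivity].
Qed.

Lemma vsum_comm p q F :
  vsum p (fun i => vsum q (fun j => F i j)) = vsum q (fun j => vsum p (fun i => F i j)).
Proof. induction p; simpl; [now rewrite vsum_eq0|]. now rewrite IHp, <- vsum_plus. Qed.

Lemma vsum_blocks p q f :
  vsum (p * q) f = vsum p (fun i => vsum q (fun r => f (i * q + r)%nat)).
Proof.
  induction p; simpl; auto.
  replace (q + p * q)%nat with (p * q + q)%nat by lia. now rewrite vsum_add, IHp.
Qed.

Lemma vsum_pairs K f :
  vsum (2 * K) f = vsum K (fun j => f (2 * j)%nat + f (2 * j + 1)%nat).
Proof.
  induction K; [reflexivity|]. cbn [vsum]. rewrite <- IHK.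
  replace (2 * S K)%nat with (2 * K + 2)%nat by lia. rewrite vsum_add. cbn [vsum].
  rewrite !Nat.add_0_r. lra.
Qed.

Lemma vsum_pairs_last K f :
  vsum (2 * K + 1) f = vsum K (fun j => f (2 * j)%nat + f (2 * j + 1)%nat) + f (2 * K)%nat.
Proof. rewrite vsum_add, vsum_pairs. cbn [vsum]. rewrite Nat.add_0_r. lra. Qed.

Lemma vsum_first_pairs K f :
  vsum (2 * K + 1) f = f 0%nat + vsum K (fun j => f (2 * j + 1)%nat + f (2 * j + 2)%nat).
Proof.
  rewrite Nat.add_comm, vsum_add, vsum_pairs. cbn [vsum]. f_equal; [lra|].
  apply vsum_ext; intros. f_equal; f_equal; lia.
Qed.

Lemma vsum_sq_le n f : (vsum n f) ^ 2 <= INR n * vsum n (fun i => f i ^ 2).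
Proof.
  induction n; cbn [vsum]; [simpl; lra|]. rewrite S_INR.
  set (s := vsum n f) in *. set (q := vsum n (fun i => f i ^ 2)) in *. set (y := f n).
  assert (0 <= INR n) by apply pos_INR.
  assert (0 <= q) by apply vsum_sq_ge0.
  assert (0 <= (s - INR n * y) ^ 2) by apply pow2_ge_0.
  destruct (Req_dec (INR n) 0) as [E|E].
  - rewrite E in *. assert (s = 0) as -> by nra. nra.
  - assert (2 * s * y <= q + INR n * y ^ 2).
    { apply Rmult_le_reg_l with (INR n); nra. }
    nra.
Qed.

(** * The scalar functions Psi and Phi *)

Definition dPsi (u : R) : R := if Rle_dec u 0 then 0 else 2 * u * exp (- (u ^ 2)).
Definition dPhi (v : R) : R := 4 / (1 + v ^ 2).

Lemma exp_neg_lt1 y : 0 < y -> exp (- y) < 1.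
Proof. intros Hy. rewrite <- exp_0. apply exp_increasing. lra. Qed.

Lemma Psi_bounds u : 0 <= Psi u <= 1.
Proof.
  unfold Psi. destruct (Rle_dec u 0); [lra|].
  assert (exp (- u ^ 2) < 1) by (apply exp_neg_lt1; nra).
  assert (0 < exp (- u ^ 2)) by apply exp_pos.
  lra.
Qed.

Lemma Psi_le_sq u : Psi u <= u ^ 2.
Proof.
  unfold Psi. destruct (Rle_dec u 0); [nra|].
  assert (1 + - u ^ 2 <= exp (- u ^ 2)) by apply exp_ineq1_le.
  lra.
Qed.

Lemma Psi_derive u : is_derive Psi u (dPsi u).
Proof.
  unfold dPsi. destruct (Rle_dec u 0) as [Hu|Hu]; [destruct (Req_dec u 0) as [->|Hu0]|].
  - (* 0 <= Psi h <= h^2, so the difference quotient at 0 is at most |h|. *)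
    apply is_derive_Reals. intros e He. exists (mkposreal e He). intros h Hh0 Hh. simpl in Hh.
    rewrite Rplus_0_l.
    assert (E0 : Psi 0 = 0) by (unfold Psi; destruct (Rle_dec 0 0); lra). rewrite E0.
    assert (H0 := proj1 (Psi_bounds h)). assert (H1 := Psi_le_sq h).
    assert (Habs : Rabs h * Rabs h = h ^ 2) by (rewrite <- pow2_abs; ring).
    replace ((Psi h - 0) / h - 0) with (Psi h / h) by (field; auto).
    unfold Rdiv. rewrite Rabs_mult, Rabs_inv, (Rabs_pos_eq (Psi h)) by lra.
    assert (0 < Rabs h) by (apply Rabs_pos_lt; auto).
    apply Rmult_lt_reg_r with (Rabs h); [lra|].
    rewrite Rmult_assoc, Rinv_l by lra. nra.
  - apply (is_derive_ext_loc (fun _ => 0)).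
    + apply (filter_imp (fun t => t < 0)); [|apply open_lt; lra].
      intros t Ht. unfold Psi. destruct (Rle_dec t 0); [auto|lra].
    + apply (is_derive_const (V := R_NormedModule)).
  - apply (is_derive_ext_loc (fun t => 1 - exp (- (t ^ 2)))).
    + apply (filter_imp (fun t => 0 < t)); [|apply open_gt; lra].
      intros t Ht. unfold Psi. destruct (Rle_dec t 0); [lra|auto].
    + auto_derive; auto. replace (u * (u * 1)) with (u ^ 2) by ring. ring.
Qed.

Lemma Phi_derive v : is_derive Phi v (dPhi v).
Proof. unfold Phi, dPhi. auto_derive; auto. unfold Rsqr. field. nra. Qed.

Lemma lipschitz_of_derive (f df : R -> R) (L a b : R) :
  (forall x, is_derive f x (df x)) -> (forall x, Rabs (df x) <= L) ->
  Rabs (f b - f a) <= L * Rabs (b - a).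
Proof.
  intros Hd Hb. destruct (MVT_gen f a b df) as [c [_ ->]].
  - intros; apply Hd.
  - intros x _. apply continuity_pt_filterlim.
    apply (ex_derive_continuous (K := R_AbsRing) (V := R_NormedModule)). eexists; apply Hd.
  - rewrite Rabs_mult. apply Rmult_le_compat_r; [apply Rabs_pos|apply Hb].
Qed.

Lemma dPsi_bounds u : 0 <= dPsi u <= 1.
Proof.
  unfold dPsi. destruct (Rle_dec u 0); [lra|].
  assert (1 + u ^ 2 <= exp (u ^ 2)) by apply exp_ineq1_le.
  assert (E : exp (- u ^ 2) * exp (u ^ 2) = 1)
    by (rewrite <- exp_plus, Rplus_opp_l; apply exp_0).
  assert (0 < exp (- u ^ 2)) by apply exp_pos.
  assert (0 <= (u - 1) ^ 2) by apply pow2_ge_0.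
  split; nra.
Qed.

Lemma Phi_bounds v : 0 <= Phi v <= 4 * PI.
Proof. unfold Phi. assert (H := atan_bound v). lra. Qed.

Lemma dPhi_bounds v : 0 <= dPhi v <= 4.
Proof.
  unfold dPhi. assert (0 <= v ^ 2) by nra. split; [apply Rle_mult_inv_pos; lra|].
  apply Rmult_le_reg_r with (1 + v ^ 2); [lra|]. unfold Rdiv.
  rewrite Rmult_assoc, Rinv_l by lra. nra.
Qed.

Lemma Psi_lip a b : Rabs (Psi b - Psi a) <= Rabs (b - a).
Proof.
  rewrite <- (Rmult_1_l (Rabs (b - a))). apply (lipschitz_of_derive Psi dPsi).
  - apply Psi_derive.
  - intros x; rewrite Rabs_pos_eq; apply dPsi_bounds.
Qed.

Lemma Phi_lip a b : Rabs (Phi b - Phi a) <= 4 * Rabs (b - a).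
Proof.
  apply (lipschitz_of_derive Phi dPhi); [apply Phi_derive|].
  intros x; rewrite Rabs_pos_eq; apply dPhi_bounds.
Qed.

Lemma dPhi_lip a b : Rabs (dPhi b - dPhi a) <= 4 * Rabs (b - a).
Proof.
  apply (lipschitz_of_derive dPhi (fun v => - 8 * v / (1 + v ^ 2) ^ 2)).
  - intros v. unfold dPhi. auto_derive; [nra|]. field. nra.
  - intros v. assert (0 <= v ^ 2) by nra.
    unfold Rdiv. rewrite Rabs_mult, Rabs_inv, (Rabs_pos_eq ((1 + v ^ 2) ^ 2)) by nra.
    apply Rmult_le_reg_r with ((1 + v ^ 2) ^ 2); [nra|].
    rewrite Rmult_assoc, Rinv_l by nra.
    rewrite Rabs_mult, Rabs_left by lra.
    assert (Habs : Rabs v * Rabs v = v ^ 2) by (rewrite <- pow2_abs; ring).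
    assert (0 <= Rabs v) by apply Rabs_pos.
    nra.
Qed.

Lemma gauss_deriv_lip a b :
  Rabs (2 * b * exp (- b ^ 2) - 2 * a * exp (- a ^ 2)) <= 2 * Rabs (b - a).
Proof.
  apply (lipschitz_of_derive (fun u => 2 * u * exp (- u ^ 2))
           (fun u => (2 - 4 * u ^ 2) * exp (- u ^ 2))).
  - intros u. auto_derive; auto. replace (u * (u * 1)) with (u ^ 2) by ring. ring.
  - intros u. assert (0 <= u ^ 2) by nra. set (y := u ^ 2) in *. clearbody y.
    assert (0 < exp (- y)) by apply exp_pos.
    assert (E : exp (- y) * exp y = 1) by (rewrite <- exp_plus, Rplus_opp_l; apply exp_0).
    assert (1 + y <= exp y) by apply exp_ineq1_le.
    assert (1 + y / 2 <= exp (y / 2)) by apply exp_ineq1_le.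
    assert (exp y = exp (y / 2) * exp (y / 2)) by (rewrite <- exp_plus; f_equal; lra).
    assert (Rabs (2 - 4 * y) <= 2 * exp y) by (apply Rabs_le; split; nra).
    rewrite Rabs_mult, (Rabs_pos_eq (exp (- y))) by lra. nra.
Qed.

Lemma dPsi_lip a b : Rabs (dPsi b - dPsi a) <= 2 * Rabs (b - a).
Proof.
  (* [dPsi] is not differentiable at 0, but it is the Gaussian derivative
     [2 u exp (- u^2)] composed with the 1-Lipschitz map [u |-> Rmax u 0]. *)
  assert (E : forall u, dPsi u = 2 * Rmax u 0 * exp (- Rmax u 0 ^ 2)).
  { intros u. unfold dPsi, Rmax. destruct (Rle_dec u 0); [ring|reflexivity]. }
  rewrite !E. eapply Rle_trans; [apply gauss_deriv_lip|].
  apply Rmult_le_compat_l; [lra|].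
  unfold Rmax. destruct (Rle_dec b 0), (Rle_dec a 0); unfold Rabs; repeat destruct Rcase_abs; lra.
Qed.

(** * Partial derivatives of h_i and f_i *)

Definition varphi_pair (a b : R) : R := Psi (- a) * Phi (- b) - Psi a * Phi b.
Definition varphi_pair_d1 (a b : R) : R := - dPsi (- a) * Phi (- b) - dPsi a * Phi b.
Definition varphi_pair_d2 (a b : R) : R := - Psi (- a) * dPhi (- b) - Psi a * dPhi b.
Definition varphi_first_d (a : R) : R := - Psi 1 * dPhi a.

Definition shift (z : nat -> R) (r : nat) (t : R) : nat -> R :=
  fun l => if Nat.eqb l r then z l + t else z l.

Lemma shift_eq z r t l : shift z r t l = z l + (if Nat.eqb l r then 1 else 0) * t.
Proof. unfold shift. destruct (Nat.eqb l r); ring. Qed.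

(* Coordinates are 0-based here: for j >= 2, [varphi z j] reads only
   [z (j - 2)] and [z (j - 1)]. *)
Definition varphi_partial (z : nat -> R) (j r : nat) : R :=
  if Nat.eqb j 1 then (if Nat.eqb r 0 then varphi_first_d (z 0%nat) else 0)
  else (if Nat.eqb r (j - 2) then varphi_pair_d1 (z (j - 2)%nat) (z (j - 1)%nat) else 0)
     + (if Nat.eqb r (j - 1) then varphi_pair_d2 (z (j - 2)%nat) (z (j - 1)%nat) else 0).

Lemma varphi_pair_derive a b sa sb :
  is_derive (fun t => varphi_pair (a + sa * t) (b + sb * t)) 0
    (sa * varphi_pair_d1 a b + sb * varphi_pair_d2 a b).
Proof.
  unfold varphi_pair, varphi_pair_d1, varphi_pair_d2. auto_derive.
  - repeat split; eexists; first [apply Psi_derive | apply Phi_derive].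
  - rewrite !(is_derive_unique _ _ _ (Psi_derive _)), !(is_derive_unique _ _ _ (Phi_derive _)).
    rewrite !Rmult_0_r, !Rplus_0_r. ring.
Qed.

Lemma varphi_first_derive a s :
  is_derive (fun t => - Psi 1 * Phi (a + s * t)) 0 (s * varphi_first_d a).
Proof.
  unfold varphi_first_d. auto_derive; [eexists; apply Phi_derive|].
  rewrite (is_derive_unique _ _ _ (Phi_derive _)), Rmult_0_r, Rplus_0_r. ring.
Qed.

Lemma varphi_derive z j r : (1 <= j)%nat ->
  is_derive (fun t => varphi (shift z r t) j) 0 (varphi_partial z j r).
Proof.
  intros Hj. unfold varphi, varphi_partial, coord. rewrite !(Nat.eqb_sym r).
  destruct (Nat.eqb_spec j 1) as [->|Hj1].
  - apply (is_derive_ext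
             (fun t => - Psi 1 * Phi (z 0%nat + (if Nat.eqb 0 r then 1 else 0) * t)));
      [intros t; now rewrite shift_eq|].
    replace (if Nat.eqb 0 r then varphi_first_d (z 0%nat) else 0)
      with ((if Nat.eqb 0 r then 1 else 0) * varphi_first_d (z 0%nat))
      by (destruct (Nat.eqb 0 r); ring).
    apply varphi_first_derive.
  - replace (j - 1 - 1)%nat with (j - 2)%nat by lia.
    set (p := (j - 2)%nat). set (q := (j - 1)%nat).
    apply (is_derive_ext
             (fun t => varphi_pair (z p + (if Nat.eqb p r then 1 else 0) * t)
                                   (z q + (if Nat.eqb q r then 1 else 0) * t)));
      [intros t; now rewrite !shift_eq|].
    replace ((if Nat.eqb p r then varphi_pair_d1 (z p) (z q) else 0)
           + (if Nat.eqb q r then varphi_pair_d2 (z p) (z q) else 0))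
      with ((if Nat.eqb p r then 1 else 0) * varphi_pair_d1 (z p) (z q)
          + (if Nat.eqb q r then 1 else 0) * varphi_pair_d2 (z p) (z q))
      by (destruct (Nat.eqb p r), (Nat.eqb q r); ring).
    apply varphi_pair_derive.
Qed.

(* [c = 0] and [c = 1] give the sums over varphi(z, 2j) and varphi(z, 2j + 1) in h_i. *)
Definition chain_partial (c K : nat) (z : nat -> R) (r : nat) : R :=
  vsum K (fun j => varphi_partial z (2 * S j + c) r).

Definition hfun_partial (m n i : nat) (z : nat -> R) (r : nat) : R :=
  if Nat.leb i (m / 3) then varphi_partial z 1 r + 3 * chain_partial 0 (n / 2) z r
  else if Nat.leb i (2 * m / 3) then varphi_partial z 1 r
  else varphi_partial z 1 r + 3 * chain_partial 1 (n / 2) z r.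

Lemma is_derive_vsum n (F : nat -> R -> R) (dF : nat -> R) :
  (forall j, (j < n)%nat -> is_derive (F j) 0 (dF j)) ->
  is_derive (fun t => vsum n (fun j => F j t)) 0 (vsum n dF).
Proof.
  induction n; intros H; simpl; [apply (is_derive_const (V := R_NormedModule))|].
  apply (is_derive_plus (fun t => vsum n (fun j => F j t)) (F n)); [|apply H; lia].
  apply IHn; intros; apply H; lia.
Qed.

Lemma hfun_derive m n i z r :
  is_derive (fun t => hfun m n i (shift z r t)) 0 (hfun_partial m n i z r).
Proof.
  assert (Hchain : forall c, is_derive
    (fun t => 3 * vsum (n / 2) (fun j => varphi (shift z r t) (2 * S j + c))) 0
    (3 * chain_partial c (n / 2) z r)).
  { intros c. apply is_derive_scal.
    apply (is_derive_vsum _ (fun j t => varphi (shift z r t) (2 * S j + c))).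
    intros; apply varphi_derive; lia. }
  assert (Hfirst := varphi_derive z 1 r (le_n 1)).
  unfold hfun, hfun_partial. destruct (Nat.leb i (m / 3)); [|destruct (Nat.leb i (2 * m / 3))].
  - apply (is_derive_plus (fun t => varphi (shift z r t) 1)); [exact Hfirst|].
    eapply is_derive_ext; [|apply (Hchain 0%nat)].
    intros t. simpl. f_equal. apply vsum_ext. intros. now rewrite Nat.add_0_r.
  - exact Hfirst.
  - apply (is_derive_plus (fun t => varphi (shift z r t) 1)); [exact Hfirst|apply Hchain].
Qed.

Lemma scaled_derive (g : (nat -> R) -> R) (G : (nat -> R) -> nat -> R) c a b z r :
  b <> 0 -> (forall y, is_derive (fun t => g (shift y r t)) 0 (G y r)) ->
  is_derive (fun t => c * g (fun k => a * shift z r t k / b)) 0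
    (c * (a / b * G (fun k => a * z k / b) r)).
Proof.
  intros Hb Hg. apply is_derive_scal.
  apply (is_derive_ext (fun t => g (shift (fun k => a * z k / b) r (a / b * t)))).
  - intros t. f_equal. apply functional_extensionality. intros k. unfold shift.
    destruct (Nat.eqb k r); field; auto.
  - apply (is_derive_comp (fun s => g (shift (fun k => a * z k / b) r s)) (fun t => a / b * t)).
    + rewrite Rmult_0_r. apply Hg.
    + auto_derive; auto. ring.
Qed.

Lemma grad_ffun eps Lf m n i z r : 0 < eps ->
  grad (ffun eps Lf m n i) z r =
  300 * PI * eps ^ 2 / (INR m * Lf) * (sqrt (INR m) * Lf / (150 * PI * eps) *
    hfun_partial m n i (fun k => sqrt (INR m) * Lf * z k / (150 * PI * eps)) r).
Proof.
  intros Heps. apply is_derive_unique, scaled_derive; [|intros; apply hfun_derive].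
  assert (PI > 0) by apply PI_RGT_0. nra.
Qed.

(** * Lipschitz continuity of the gradients *)

Lemma prod_lip x1 y1 x2 y2 X Y Lx Ly :
  Rabs (x1 - x2) <= Lx -> Rabs (y1 - y2) <= Ly -> Rabs y1 <= Y -> Rabs x2 <= X ->
  Rabs (x1 * y1 - x2 * y2) <= Lx * Y + X * Ly.
Proof.
  intros H1 H2 H3 H4. replace (x1 * y1 - x2 * y2) with ((x1 - x2) * y1 + x2 * (y1 - y2)) by ring.
  eapply Rle_trans; [apply Rabs_triang|]. rewrite !Rabs_mult.
  apply Rplus_le_compat; apply Rmult_le_compat; auto using Rabs_pos.
Qed.

Lemma Rabs_opp_sub a b : Rabs (- a - - b) = Rabs (a - b).
Proof. rewrite <- Rabs_Ropp. f_equal. ring. Qed.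

Lemma varphi_pair_d1_lip a b a' b' :
  Rabs (varphi_pair_d1 a b - varphi_pair_d1 a' b') <= 16 * PI * Rabs (a - a') + 8 * Rabs (b - b').
Proof.
  assert (Hneg : Rabs (dPsi (- a) * Phi (- b) - dPsi (- a') * Phi (- b'))
                 <= 2 * Rabs (a - a') * (4 * PI) + 1 * (4 * Rabs (b - b'))).
  { apply prod_lip; [rewrite <- (Rabs_opp_sub a a'); apply dPsi_lip
                    |rewrite <- (Rabs_opp_sub b b'); apply Phi_lip| |];
      rewrite Rabs_pos_eq; first [apply Phi_bounds | apply dPsi_bounds]. }
  assert (Hpos : Rabs (dPsi a * Phi b - dPsi a' * Phi b')
                 <= 2 * Rabs (a - a') * (4 * PI) + 1 * (4 * Rabs (b - b'))).
  { apply prod_lip; [apply dPsi_lip|apply Phi_lip| |];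
      rewrite Rabs_pos_eq; first [apply Phi_bounds | apply dPsi_bounds]. }
  unfold varphi_pair_d1.
  replace (_ - _) with (- (dPsi (- a) * Phi (- b) - dPsi (- a') * Phi (- b'))
                        - (dPsi a * Phi b - dPsi a' * Phi b')) by ring.
  eapply Rle_trans; [apply Rabs_triang|]. rewrite Rabs_Ropp, Rabs_Ropp. lra.
Qed.

Lemma varphi_pair_d2_lip a b a' b' :
  Rabs (varphi_pair_d2 a b - varphi_pair_d2 a' b') <= 8 * Rabs (a - a') + 8 * Rabs (b - b').
Proof.
  assert (Hneg : Rabs (Psi (- a) * dPhi (- b) - Psi (- a') * dPhi (- b'))
                 <= Rabs (a - a') * 4 + 1 * (4 * Rabs (b - b'))).
  { apply prod_lip; [rewrite <- (Rabs_opp_sub a a'); apply Psi_lip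
                    |rewrite <- (Rabs_opp_sub b b'); apply dPhi_lip| |];
      rewrite Rabs_pos_eq; first [apply dPhi_bounds | apply Psi_bounds]. }
  assert (Hpos : Rabs (Psi a * dPhi b - Psi a' * dPhi b')
                 <= Rabs (a - a') * 4 + 1 * (4 * Rabs (b - b'))).
  { apply prod_lip; [apply Psi_lip|apply dPhi_lip| |];
      rewrite Rabs_pos_eq; first [apply dPhi_bounds | apply Psi_bounds]. }
  unfold varphi_pair_d2.
  replace (_ - _) with (- (Psi (- a) * dPhi (- b) - Psi (- a') * dPhi (- b'))
                        - (Psi a * dPhi b - Psi a' * dPhi b')) by ring.
  eapply Rle_trans; [apply Rabs_triang|]. rewrite Rabs_Ropp, Rabs_Ropp. lra.
Qed.

Lemma varphi_first_d_lip a a' : Rabs (varphi_first_d a - varphi_first_d a') <= 4 * Rabs (a - a').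
Proof.
  unfold varphi_first_d.
  replace (_ - _) with (- Psi 1 * (dPhi a - dPhi a')) by ring.
  rewrite Rabs_mult, Rabs_Ropp, Rabs_pos_eq by apply Psi_bounds.
  assert (H1 := Psi_bounds 1). assert (H2 := dPhi_lip a' a).
  assert (0 <= Rabs (dPhi a - dPhi a')) by apply Rabs_pos. nra.
Qed.

Lemma varphi_partial_first_lip z w r :
  Rabs (varphi_partial z 1 r - varphi_partial w 1 r) <= 4 * Rabs (z r - w r).
Proof.
  unfold varphi_partial; simpl. destruct (Nat.eqb_spec r 0) as [->|].
  - apply varphi_first_d_lip.
  - rewrite Rminus_0_r, Rabs_R0. assert (H := Rabs_pos (z r - w r)). lra.
Qed.

Ltac case_nat_tests := repeat match goal with
  | |- context [Nat.eqb ?a ?b] => destruct (Nat.eqb_spec a b); try (exfalso; lia)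
  | |- context [Nat.ltb ?a ?b] => destruct (Nat.ltb_spec a b); try (exfalso; lia)
  end.

Lemma varphi_partial_chain z j c r :
  varphi_partial z (2 * S j + c) r =
  (if Nat.eqb r (2 * j + c)
   then varphi_pair_d1 (z (2 * j + c)%nat) (z (2 * j + c + 1)%nat) else 0)
  + (if Nat.eqb r (2 * j + c + 1)
     then varphi_pair_d2 (z (2 * j + c)%nat) (z (2 * j + c + 1)%nat) else 0).
Proof.
  unfold varphi_partial.
  replace (2 * S j + c - 2)%nat with (2 * j + c)%nat by lia.
  replace (2 * S j + c - 1)%nat with (2 * j + c + 1)%nat by lia.
  destruct (Nat.eqb_spec (2 * S j + c) 1); [lia|reflexivity].
Qed.

Lemma chain_partial_d1 c K z j : (j < K)%nat ->
  chain_partial c K z (2 * j + c) = varphi_pair_d1 (z (2 * j + c)%nat) (z (2 * j + c + 1)%nat).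
Proof.
  intros Hj. unfold chain_partial. rewrite (vsum_eq_single _ _ j Hj).
  - rewrite varphi_partial_chain. case_nat_tests. ring.
  - intros i Hi Hij. rewrite varphi_partial_chain. case_nat_tests. ring.
Qed.

Lemma chain_partial_d2 c K z j : (j < K)%nat ->
  chain_partial c K z (2 * j + c + 1) = varphi_pair_d2 (z (2 * j + c)%nat) (z (2 * j + c + 1)%nat).
Proof.
  intros Hj. unfold chain_partial. rewrite (vsum_eq_single _ _ j Hj).
  - rewrite varphi_partial_chain. case_nat_tests. ring.
  - intros i Hi Hij. rewrite varphi_partial_chain. case_nat_tests. ring.
Qed.

Lemma chain_partial_out c K z r : (r < c \/ 2 * K + c <= r)%nat -> chain_partial c K z r = 0.
Proof.
  intros Hr. unfold chain_partial. apply vsum_eq0. intros j Hj.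
  rewrite varphi_partial_chain. case_nat_tests. ring.
Qed.

Lemma sq_le_of_abs_le u s : Rabs u <= s -> u ^ 2 <= s ^ 2.
Proof. intros H. rewrite <- pow2_abs. apply pow_incr. split; [apply Rabs_pos|exact H]. Qed.

Lemma pair_bound E1 E2 A B da db :
  Rabs E1 <= 4 * Rabs da -> Rabs E2 <= 4 * Rabs db ->
  Rabs A <= 16 * PI * Rabs da + 8 * Rabs db -> Rabs B <= 8 * Rabs da + 8 * Rabs db ->
  (E1 + 3 * A) ^ 2 + (E2 + 3 * B) ^ 2 <= (75 * PI) ^ 2 * (da ^ 2 + db ^ 2).
Proof.
  intros HE1 HE2 HA HB. rewrite <- (pow2_abs da), <- (pow2_abs db).
  set (X := Rabs da) in *. set (Y := Rabs db) in *.
  assert (0 <= X) by apply Rabs_pos. assert (0 <= Y) by apply Rabs_pos.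
  set (p := 4 + 48 * PI).
  assert (H1 : (E1 + 3 * A) ^ 2 <= (p * X + 24 * Y) ^ 2).
  { apply sq_le_of_abs_le. eapply Rle_trans; [apply Rabs_triang|].
    rewrite Rabs_mult, (Rabs_pos_eq 3) by lra. unfold p. lra. }
  assert (H2 : (E2 + 3 * B) ^ 2 <= (24 * X + 28 * Y) ^ 2).
  { apply sq_le_of_abs_le. eapply Rle_trans; [apply Rabs_triang|].
    rewrite Rabs_mult, (Rabs_pos_eq 3) by lra. lra. }
  (* Cauchy-Schwarz on both rows, then (4 + 48 PI)^2 + 24^2 + 24^2 + 28^2 <= (75 PI)^2. *)
  assert (0 <= (24 * X - p * Y) ^ 2) by apply pow2_ge_0.
  assert (0 <= (28 * X - 24 * Y) ^ 2) by apply pow2_ge_0.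
  assert (p ^ 2 + 1936 <= (75 * PI) ^ 2) by (assert (Hpi := PI2_1); unfold p; nra).
  assert (0 <= X ^ 2 + Y ^ 2) by nra.
  nra.
Qed.

Lemma PI_sq_ge16 : 16 <= (75 * PI) ^ 2.
Proof. assert (H := PI2_1). nra. Qed.

Lemma half_odd K : ((2 * K + 1) / 2 = K)%nat.
Proof. rewrite Nat.add_comm, Nat.mul_comm, Nat.div_add by lia. reflexivity. Qed.

Section HfunGradientLipschitz.

Variables z w : nat -> R.

Let dz r := z r - w r.
Let E r := varphi_partial z 1 r - varphi_partial w 1 r.
Let C c K r := chain_partial c K z r - chain_partial c K w r.

Lemma first_partial_sq_le r : E r ^ 2 <= 16 * dz r ^ 2.
Proof.
  assert (H := sq_le_of_abs_le _ _ (varphi_partial_first_lip z w r)).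
  unfold E, dz. rewrite <- (pow2_abs (z r - w r)). nra.
Qed.

Lemma chain_single_bound c K r : (r < c \/ 2 * K + c <= r)%nat ->
  (E r + 3 * C c K r) ^ 2 <= (75 * PI) ^ 2 * dz r ^ 2.
Proof.
  intros Hr. unfold C. rewrite !chain_partial_out by exact Hr.
  assert (H := first_partial_sq_le r). assert (H16 := PI_sq_ge16).
  assert (0 <= dz r ^ 2) by apply pow2_ge_0.
  replace (E r + 3 * (0 - 0)) with (E r) by ring. nra.
Qed.

Lemma chain_pair_bound c K j : (j < K)%nat ->
  (E (2 * j + c)%nat + 3 * C c K (2 * j + c)%nat) ^ 2
  + (E (2 * j + c + 1)%nat + 3 * C c K (2 * j + c + 1)%nat) ^ 2
  <= (75 * PI) ^ 2 * (dz (2 * j + c)%nat ^ 2 + dz (2 * j + c + 1)%nat ^ 2).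
Proof.
  intros Hj. unfold C.
  rewrite chain_partial_d1, chain_partial_d1, chain_partial_d2, chain_partial_d2 by exact Hj.
  apply pair_bound; [apply varphi_partial_first_lip|apply varphi_partial_first_lip
                    |apply varphi_pair_d1_lip|apply varphi_pair_d2_lip].
Qed.

Lemma chain_lip c K : (c <= 1)%nat ->
  vsum (2 * K + 1) (fun r => (E r + 3 * C c K r) ^ 2)
  <= (75 * PI) ^ 2 * vsum (2 * K + 1) (fun r => dz r ^ 2).
Proof.
  intros Hc. destruct c as [|[|c]]; [| |lia].
  - rewrite !vsum_pairs_last, Rmult_plus_distr_l, <- vsum_scal.
    apply Rplus_le_compat; [|apply chain_single_bound; lia].
    apply vsum_le. intros j Hj. assert (H := chain_pair_bound 0 K j Hj).
    rewrite !Nat.add_0_r in H. exact H.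
  - rewrite !vsum_first_pairs, Rmult_plus_distr_l, <- vsum_scal.
    apply Rplus_le_compat; [apply chain_single_bound; lia|].
    apply vsum_le. intros j Hj. assert (H := chain_pair_bound 1 K j Hj).
    replace (2 * j + 1 + 1)%nat with (2 * j + 2)%nat in H by lia. exact H.
Qed.

Lemma hfun_partial_lip m n i : Nat.Odd n ->
  vsum n (fun r => (hfun_partial m n i z r - hfun_partial m n i w r) ^ 2)
  <= (75 * PI) ^ 2 * vsum n (fun r => (z r - w r) ^ 2).
Proof.
  intros [K ->]. unfold hfun_partial. rewrite half_odd.
  destruct (Nat.leb i (m / 3)); [|destruct (Nat.leb i (2 * m / 3))].
  - rewrite (vsum_ext _ _ (fun r => (E r + 3 * C 0 K r) ^ 2)) by (intros; unfold E, C; ring).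
    apply chain_lip; lia.
  - rewrite <- vsum_scal. apply vsum_le. intros r _.
    assert (H := first_partial_sq_le r). assert (H16 := PI_sq_ge16).
    assert (0 <= dz r ^ 2) by apply pow2_ge_0. fold (E r) (dz r). nra.
  - rewrite (vsum_ext _ _ (fun r => (E r + 3 * C 1 K r) ^ 2)) by (intros; unfold E, C; ring).
    apply chain_lip; lia.
Qed.

End HfunGradientLipschitz.

Lemma ffun_scale_identity eps Lf m : 0 < eps -> 0 < Lf -> (0 < m)%nat ->
  300 * PI * eps ^ 2 / (INR m * Lf) * (sqrt (INR m) * Lf / (150 * PI * eps)) ^ 2 * (75 * PI) = Lf.
Proof.
  intros He HL Hm. assert (0 < INR m) by (apply lt_0_INR; auto).
  assert (PI > 0) by apply PI_RGT_0.
  replace ((sqrt (INR m) * Lf / (150 * PI * eps)) ^ 2)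
    with (sqrt (INR m) ^ 2 * Lf ^ 2 / (150 * PI * eps) ^ 2) by (field; lra).
  rewrite pow2_sqrt by lra. field. repeat split; lra.
Qed.

Lemma grad_ffun_lip eps Lf m n i z w : 0 < eps -> 0 < Lf -> (0 < m)%nat -> Nat.Odd n ->
  vsum n (fun r => (grad (ffun eps Lf m n i) z r - grad (ffun eps Lf m n i) w r) ^ 2)
  <= Lf ^ 2 * vsum n (fun r => (z r - w r) ^ 2).
Proof.
  intros He HL Hm Hn.
  set (c := 300 * PI * eps ^ 2 / (INR m * Lf)). set (s := sqrt (INR m) * Lf / (150 * PI * eps)).
  set (sz := fun k => sqrt (INR m) * Lf * z k / (150 * PI * eps)).
  set (sw := fun k => sqrt (INR m) * Lf * w k / (150 * PI * eps)).
  rewrite (vsum_ext _ _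
             (fun r => (c * s) ^ 2 * (hfun_partial m n i sz r - hfun_partial m n i sw r) ^ 2))
    by (intros; rewrite !grad_ffun by exact He; fold c s sz sw; ring).
  rewrite vsum_scal.
  assert (Hh := hfun_partial_lip sz sw m n i Hn).
  rewrite (vsum_ext _ (fun r => (sz r - sw r) ^ 2) (fun r => s ^ 2 * (z r - w r) ^ 2)) in Hh
    by (intros; unfold sz, sw, s, Rdiv; ring).
  rewrite vsum_scal in Hh.
  rewrite <- (ffun_scale_identity eps Lf m He HL Hm). fold c s.
  replace ((c * s ^ 2 * (75 * PI)) ^ 2 * vsum n (fun r => (z r - w r) ^ 2))
    with ((c * s) ^ 2 * ((75 * PI) ^ 2 * (s ^ 2 * vsum n (fun r => (z r - w r) ^ 2)))) by ring.
  apply Rmult_le_compat_l; [apply pow2_ge_0|exact Hh].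
Qed.

(** * Block structure of f_0 and H *)

Lemma div_block a n r : (r < n)%nat -> ((a * n + r) / n = a)%nat.
Proof.
  intros Hr. rewrite Nat.div_add_l by lia. rewrite Nat.div_small by exact Hr. lia.
Qed.

Lemma mod_block a n r : (r < n)%nat -> ((a * n + r) mod n = r)%nat.
Proof. intros Hr. rewrite Nat.add_comm, Nat.Div0.mod_add. apply Nat.mod_small, Hr. Qed.

Lemma block_index_inj a b n r s : (r < n)%nat -> (s < n)%nat ->
  (a * n + r = b * n + s)%nat -> a = b /\ r = s.
Proof.
  intros Hr Hs E. split.
  - now rewrite <- (div_block a n r Hr), <- (div_block b n s Hs), E.
  - now rewrite <- (mod_block a n r Hr), <- (mod_block b n s Hs), E.
Qed.

Lemma Derive_const_plus (g : R -> R) c x : Derive (fun t => c + g t) x = Derive g x.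
Proof. unfold Derive. f_equal. apply Lim_ext. intros h. unfold Rdiv. ring. Qed.

Lemma partial_vsum_blocks (F : nat -> (nat -> R) -> R) M n x i r :
  (forall i z w, (forall l, (l < n)%nat -> z l = w l) -> F i z = F i w) ->
  (i < M)%nat -> (r < n)%nat ->
  partial (fun y => vsum M (fun i => F i (block n y i))) (i * n + r) x
  = partial (F i) r (block n x i).
Proof.
  intros HF Hi Hr. unfold partial.
  symmetry.
  rewrite <- (Derive_const_plus _ (vsum M (fun j => if Nat.eqb j i then 0 else F j (block n x j)))).
  symmetry. apply Derive_ext. intros t. rewrite (vsum_split_at M _ i Hi). f_equal.
  - apply vsum_ext. intros j Hj. destruct (Nat.eqb_spec j i); [reflexivity|].
    apply HF. intros l Hl. unfold block.
    destruct (Nat.eqb_spec (j * n + l) (i * n + r)) as [E|]; [|reflexivity].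
    destruct (block_index_inj _ _ _ _ _ Hl Hr E). contradiction.
  - apply HF. intros l Hl. unfold block.
    destruct (Nat.eqb_spec (i * n + l) (i * n + r)), (Nat.eqb_spec l r); try lia; reflexivity.
Qed.

(* For even [n], the last term of h_i would read the coordinate [z n]. *)
Lemma hfun_ext m n i z w : Nat.Odd n -> (forall l, (l < n)%nat -> z l = w l) ->
  hfun m n i z = hfun m n i w.
Proof.
  intros [K ->] H.
  assert (Hv : forall j, (1 <= j <= 2 * K + 1)%nat -> varphi z j = varphi w j).
  { intros j Hj. unfold varphi, coord. rewrite !H by lia. reflexivity. }
  unfold hfun. rewrite half_odd, Hv by lia.
  rewrite (vsum_ext _ (fun j => varphi z (2 * S j))) with (g := fun j => varphi w (2 * S j))
    by (intros; apply Hv; lia).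
  rewrite (vsum_ext _ (fun j => varphi z (2 * S j + 1))) with (g := fun j => varphi w (2 * S j + 1))
    by (intros; apply Hv; lia).
  reflexivity.
Qed.

Lemma grad_f0_block eps Lf m n x i r : Nat.Odd n -> (i < m)%nat -> (r < n)%nat ->
  grad (f0 eps Lf m n) x (i * n + r)%nat = grad (ffun eps Lf m n (S i)) (block n x i) r.
Proof.
  intros Hn Hi Hr. unfold grad, f0.
  apply (partial_vsum_blocks (fun i => ffun eps Lf m n (S i))); auto.
  intros j z w Hzw. unfold ffun. f_equal. apply hfun_ext; [exact Hn|].
  intros l Hl. now rewrite Hzw.
Qed.

Lemma Hmat_block Lf M n a r i s : (r < n)%nat -> (s < n)%nat ->
  Hmat Lf M n (a * n + r)%nat (i * n + s)%nat = INR M * Lf * (Jmat M a i * Imat n r s).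
Proof.
  intros Hr Hs. unfold Hmat, kron.
  now rewrite (div_block a n r Hr), (mod_block a n r Hr), (div_block i n s Hs),
    (mod_block i n s Hs).
Qed.

Lemma Hmat_mul_block Lf M n x a r : (S a < M)%nat -> (r < n)%nat ->
  matvec (Hmat Lf M n) (M * n) x (a * n + r)%nat
  = INR M * Lf * (x (S a * n + r)%nat - x (a * n + r)%nat).
Proof.
  intros Ha Hr. unfold matvec. rewrite vsum_blocks.
  rewrite (vsum_ext M _ (fun i => INR M * Lf * Jmat M a i * x (i * n + r)%nat)).
  - rewrite (vsum_eq_two M _ a (S a))
      by (try lia; intros; unfold Jmat; case_nat_tests; simpl; ring).
    unfold Jmat. case_nat_tests. simpl. ring.
  - intros i Hi. rewrite (vsum_eq_single n _ r Hr).
    + rewrite Hmat_block by assumption. unfold Imat. case_nat_tests. simpl. ring.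
    + intros s Hs Hsr. rewrite Hmat_block by assumption. unfold Imat. case_nat_tests; simpl; ring.
Qed.

Lemma vsum_sq_Hmat_mul Lf M n x :
  vsum ((M - 1) * n) (fun j => matvec (Hmat Lf M n) (M * n) x j ^ 2)
  = INR M ^ 2 * Lf ^ 2 *
    vsum n (fun r => vsum (M - 1) (fun a => (x (S a * n + r)%nat - x (a * n + r)%nat) ^ 2)).
Proof.
  rewrite vsum_blocks, vsum_comm, <- vsum_scal. apply vsum_ext. intros r Hr.
  rewrite <- vsum_scal. apply vsum_ext. intros a Ha.
  rewrite Hmat_mul_block by lia. ring.
Qed.

Lemma Hmat_tmul_block_sum Lf M n gamma r : (r < n)%nat ->
  vsum M (fun i => matvec (transpose (Hmat Lf M n)) ((M - 1) * n) gamma (i * n + r)%nat) = 0.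
Proof.
  intros Hr. unfold matvec, transpose.
  rewrite (vsum_comm M ((M - 1) * n) (fun i j => Hmat Lf M n j (i * n + r)%nat * gamma j)).
  apply vsum_eq0. intros j Hj.
  assert (Ej : j = (j / n * n + j mod n)%nat) by (rewrite Nat.mul_comm; apply Nat.div_mod_eq).
  assert (Hq : (j mod n < n)%nat) by (apply Nat.mod_upper_bound; lia).
  assert (Ha : (j / n < M - 1)%nat) by (apply Nat.Div0.div_lt_upper_bound; lia).
  set (a := (j / n)%nat) in *. set (q := (j mod n)%nat) in *.
  rewrite (vsum_ext M _ (fun i => INR M * Lf * Imat n q r * gamma j * Jmat M a i))
    by (intros; rewrite Ej at 1; rewrite Hmat_block by assumption; ring).
  rewrite vsum_scal, (vsum_eq_two M _ a (S a))
    by (try lia; intros; unfold Jmat; case_nat_tests; simpl; ring).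
  unfold Jmat. case_nat_tests. simpl. ring.
Qed.

(** * The consensus estimate *)

Lemma telescope y i : y i - y 0%nat = vsum i (fun a => y (S a) - y a).
Proof. induction i; simpl; [ring|]. rewrite <- IHi. ring. Qed.

Lemma mean_sq_dev_le M y c : (0 < M)%nat ->
  vsum M (fun i => (y i - / INR M * vsum M y) ^ 2) <= vsum M (fun i => (y i - c) ^ 2).
Proof.
  intros HM. set (yb := / INR M * vsum M y). assert (0 < INR M) by (apply lt_0_INR; auto).
  assert (Hs : vsum M y = INR M * yb) by (unfold yb; field; lra).
  rewrite (vsum_ext M (fun i => (y i - c) ^ 2)
             (fun i => (y i - yb) ^ 2
                       + (2 * (yb - c) * y i + (- 2 * yb * (yb - c) + (yb - c) ^ 2))))
    by (intros; ring).
  rewrite vsum_plus, vsum_plus, vsum_scal, vsum_const, Hs.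
  assert (0 <= INR M * (yb - c) ^ 2) by (apply Rmult_le_pos; [lra|apply pow2_ge_0]).
  nra.
Qed.

Lemma mean_sq_dev_le_diffs M y : (0 < M)%nat ->
  vsum M (fun i => (y i - / INR M * vsum M y) ^ 2)
  <= INR M ^ 2 * vsum (M - 1) (fun a => (y (S a) - y a) ^ 2).
Proof.
  intros HM. eapply Rle_trans; [apply (mean_sq_dev_le M y (y 0%nat) HM)|].
  set (Q := vsum (M - 1) (fun a => (y (S a) - y a) ^ 2)).
  apply Rle_trans with (vsum M (fun _ => INR M * Q)); [|rewrite vsum_const; right; ring].
  apply vsum_le. intros i Hi. rewrite telescope.
  eapply Rle_trans; [apply vsum_sq_le|].
  apply Rmult_le_compat; [apply pos_INR|apply vsum_sq_ge0|apply le_INR; lia|].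
  apply vsum_le_len; [lia|intros; apply pow2_ge_0].
Qed.

Lemma vsum_blocks_sq_le M n g :
  vsum n (fun r => vsum M (fun i => g (i * n + r)%nat) ^ 2)
  <= INR M * vsum (M * n) (fun k => g k ^ 2).
Proof.
  rewrite vsum_blocks, vsum_comm, <- vsum_scal. apply vsum_le. intros r _. apply vsum_sq_le.
Qed.

Lemma sq_le_two_sq a b : b ^ 2 <= 2 * a ^ 2 + 2 * (a - b) ^ 2.
Proof. assert (0 <= (2 * a - b) ^ 2) by apply pow2_ge_0. nra. Qed.

Section MeanGradient.

Variables (M n : nat) (L : R) (G : nat -> (nat -> R) -> nat -> R) (x g : nat -> R).
Hypothesis HM : (0 < M)%nat.
Hypothesis HG_lip : forall i z w, (i < M)%nat ->
  vsum n (fun r => (G i z r - G i w r) ^ 2) <= L ^ 2 * vsum n (fun r => (z r - w r) ^ 2).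
Hypothesis Hg_blocks : forall r, (r < n)%nat ->
  vsum M (fun i => g (i * n + r)%nat) = vsum M (fun i => G i (block n x i) r).

Let xbar r := / INR M * vsum M (fun i => block n x i r).
Let disagreement :=
  vsum n (fun r => vsum (M - 1) (fun a => (x (S a * n + r)%nat - x (a * n + r)%nat) ^ 2)).

Lemma grad_sum_dev_le :
  vsum n (fun r => (vsum M (fun i => G i (block n x i) r) - vsum M (fun i => G i xbar r)) ^ 2)
  <= INR M * (INR M ^ 2 * L ^ 2 * disagreement).
Proof.
  eapply Rle_trans.
  { apply vsum_le. intros r _. rewrite <- vsum_minus. apply vsum_sq_le. }
  rewrite vsum_scal, vsum_comm. apply Rmult_le_compat_l; [apply pos_INR|].
  eapply Rle_trans.
  { apply vsum_le. intros i Hi. apply (HG_lip i (block n x i) xbar Hi). }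
  rewrite vsum_scal, vsum_comm, (Rmult_comm (INR M ^ 2)), Rmult_assoc.
  apply Rmult_le_compat_l; [apply pow2_ge_0|].
  unfold disagreement. rewrite <- vsum_scal. apply vsum_le. intros r _.
  apply (mean_sq_dev_le_diffs M (fun i => x (i * n + r)%nat) HM).
Qed.

Lemma mean_grad_sq_le :
  vsum n (fun r => vsum M (fun i => G i xbar r) ^ 2)
  <= 2 * INR M * (vsum (M * n) (fun k => g k ^ 2) + INR M ^ 2 * L ^ 2 * disagreement).
Proof.
  set (S r := vsum M (fun i => G i (block n x i) r)).
  set (U r := vsum M (fun i => G i xbar r)).
  assert (HS : vsum n (fun r => S r ^ 2) <= INR M * vsum (M * n) (fun k => g k ^ 2)).
  { eapply Rle_trans; [|apply vsum_blocks_sq_le].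
    apply Req_le, vsum_ext. intros r Hr. unfold S. now rewrite Hg_blocks. }
  assert (HSU : vsum n (fun r => (S r - U r) ^ 2) <= INR M * (INR M ^ 2 * L ^ 2 * disagreement))
    by apply grad_sum_dev_le.
  apply Rle_trans with (vsum n (fun r => 2 * S r ^ 2 + 2 * (S r - U r) ^ 2)).
  - apply vsum_le. intros r _. apply sq_le_two_sq.
  - rewrite vsum_plus, !vsum_scal. lra.
Qed.

End MeanGradient.

Lemma vnorm_ge0 n v : 0 <= vnorm n v.
Proof. apply sqrt_pos. Qed.

Lemma vnorm_sq n v : vnorm n v ^ 2 = vsum n (fun i => v i ^ 2).
Proof. unfold vnorm. apply pow2_sqrt, vsum_sq_ge0. Qed.

Lemma vnorm_scal n c v : vnorm n (fun i => c * v i) = Rabs c * vnorm n v.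
Proof.
  unfold vnorm. rewrite (vsum_ext _ _ (fun i => c ^ 2 * v i ^ 2)) by (intros; ring).
  rewrite vsum_scal, sqrt_mult by (apply pow2_ge_0 || apply vsum_sq_ge0).
  now rewrite <- pow2_abs, sqrt_pow2 by apply Rabs_pos.
Qed.

Lemma Rmax_ge_of_sq_le M A B N : 0 < M -> 0 <= A -> 0 <= B -> 0 <= N ->
  N ^ 2 <= 2 * M * (B ^ 2 + A ^ 2) -> sqrt M / 2 * (/ M * N) <= Rmax A B.
Proof.
  intros HM HA HB HN HN2.
  assert (HAm := Rmax_l A B). assert (HBm := Rmax_r A B). set (mx := Rmax A B) in *.
  assert (Hs : 0 < sqrt M) by (apply sqrt_lt_R0, HM).
  assert (Hs2 : sqrt M ^ 2 = M) by (apply pow2_sqrt; lra).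
  assert (A ^ 2 <= mx ^ 2) by (apply pow_incr; lra).
  assert (B ^ 2 <= mx ^ 2) by (apply pow_incr; lra).
  assert (HNmx : N ^ 2 <= (2 * sqrt M * mx) ^ 2).
  { replace ((2 * sqrt M * mx) ^ 2) with (2 * sqrt M ^ 2 * (mx ^ 2 + mx ^ 2)) by ring.
    rewrite Hs2.
    eapply Rle_trans; [exact HN2|]. apply Rmult_le_compat_l; lra. }
  assert (N <= 2 * sqrt M * mx).
  { apply Rsqr_incr_0_var; [unfold Rsqr; nra|]. apply Rmult_le_pos; lra. }
  replace (/ M) with (/ sqrt M ^ 2) by now rewrite Hs2.
  replace (sqrt M / 2 * (/ sqrt M ^ 2 * N)) with (N / (2 * sqrt M)) by (field; lra).
  apply Rmult_le_reg_r with (2 * sqrt M); [lra|]. unfold Rdiv.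
  rewrite Rmult_assoc, Rinv_l by lra. lra.
Qed.

Theorem lemma6 (eps Lf : R) (m1 m2 dbar : nat)
  (Heps : 0 < eps < 1) (HLf : 0 < Lf)
  (Hm1 : (2 <= m1)%nat) (Hm2 : (1 <= m2)%nat) (Hev : Nat.Even (m1 * m2))
  (Hodd : Nat.Odd dbar) (Hd5 : (5 <= dbar)%nat) :
  let m := (3 * m1 * m2)%nat in
  let d := (m * dbar)%nat in
  forall x gamma : nat -> R,
  let xbar := fun k => / INR m * vsum m (fun i => block dbar x i k) in
  Rmax (vnorm ((m - 1) * dbar) (matvec (Hmat Lf m dbar) d x))
       (vnorm d (fun k => grad (f0 eps Lf m dbar) x k
                          + matvec (transpose (Hmat Lf m dbar)) ((m - 1) * dbar) gamma k))
  >= sqrt (INR m) / 2 *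
     vnorm dbar (fun k => / INR m * vsum m (fun i => grad (ffun eps Lf m dbar (S i)) xbar k)).
Proof.
  intros m d x gamma xbar.
  assert (Hm : (0 < m)%nat) by (unfold m; lia).
  assert (HmR : 0 < INR m) by (apply lt_0_INR, Hm).
  set (G := fun i => grad (ffun eps Lf m dbar (S i))).
  set (g := fun k => grad (f0 eps Lf m dbar) x k
                     + matvec (transpose (Hmat Lf m dbar)) ((m - 1) * dbar) gamma k).
  assert (Hlip : forall i z w, (i < m)%nat ->
            vsum dbar (fun r => (G i z r - G i w r) ^ 2)
            <= Lf ^ 2 * vsum dbar (fun r => (z r - w r) ^ 2))
    by (intros; apply grad_ffun_lip; [lra|exact HLf|exact Hm|exact Hodd]).
  assert (Hblocks : forall r, (r < dbar)%nat ->
            vsum m (fun i => g (i * dbar + r)%nat) = vsum m (fun i => G i (block dbar x i) r)).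
  { intros r Hr. unfold g. rewrite vsum_plus, Hmat_tmul_block_sum, Rplus_0_r by exact Hr.
    apply vsum_ext. intros i Hi. now apply grad_f0_block. }
  assert (Hmean := mean_grad_sq_le m dbar Lf G x g Hm Hlip Hblocks).
  rewrite <- vsum_sq_Hmat_mul in Hmean.
  rewrite vnorm_scal, Rabs_pos_eq by (left; apply Rinv_0_lt_compat, HmR).
  apply Rle_ge, Rmax_ge_of_sq_le; auto using vnorm_ge0.
  rewrite !vnorm_sq. exact Hmean.
Qed.
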